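(* Let $A$ be a $d\times n$ matrix with non-negative integer entries such that each standard basis vector $\mathbf e_1,\dots,\mathbf e_d$ of $\mathbb Z^d$ appears as a column of $A$. Let $\mathbf c$ be a column of $A$ and $I=\{k: c_k>0,\ 1\le k\le d\}$. For $i\in I$, let $E^{(i)}$ be the matrix obtained from $A$ by replacing the column $\mathbf c$ with $\mathbf e_i$. Then $p_{E^{(i)}}(\mathbf b)\ge p_A(\mathbf b)$ for all $\mathbf b\in\mathbb Z^d_{\ge0}$.
   Context: For an integer matrix $M$ with $r$ columns and $\mathbf b$ a vector, $p_M(\mathbf b)=\#\{\mathbf x\in\mathbb Z^r_{\ge0}:M\mathbf x=\mathbf b\}$ (the vector partition function, counted as a cardinality). *)

From mathcomp Require Import all_boot all_algebra.
From mathcomp Require Import boolp classical_sets cardinality.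
Set Implicit Arguments. Unset Strict Implicit. Unset Printing Implicit Defensive.

(* Solution set of M x = b with x in Z_{>=0}^r; p_M(b) is its cardinality. *)
Definition vpsol (d r : nat) (M : 'M[nat]_(d, r)) (b : 'I_d -> nat) : set ('I_r -> nat) :=
  [set x | forall i : 'I_d, (\sum_(j < r) M i j * x j)%N = b i].

Definition replace_col (d n : nat) (A : 'M[nat]_(d, n)) (jc : 'I_n) (k : 'I_d) : 'M[nat]_(d, n) :=
  \matrix_(r < d, j < n) (if j == jc then nat_of_bool (r == k) else A r j).

From mathcomp Require Import all_boot all_algebra.
From mathcomp Require Import boolp classical_sets cardinality.

Set Implicit Arguments.
Unset Strict Implicit.
Unset Printing Implicit Defensive.

(* Write c for column jc of A and J k for a column of A equal to e_k. Since
   c = c_i e_i + sum_(k <> i) c_k e_k, a solution x of A x = b is turned into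
   a solution of E^(i) x' = b by putting c_i x_c on the new column e_i and
   adding c_k x_c to the entry of each unit column J k, k <> i. The new entry
   c_i x_c determines x_c because c_i > 0, and then x is recovered from x'. *)

Lemma replace_col_row_sum (d n : nat) (A : 'M[nat]_(d, n)) (jc : 'I_n)
    (i r : 'I_d) (y : 'I_n -> nat) :
  (\sum_(j < n) replace_col A jc i r j * y j
   = \sum_(j < n | j != jc) A r j * y j + (r == i) * y jc)%N.
Proof.
rewrite (bigD1 jc) //= addnC mxE eqxx eq_sym; congr addn.
by apply: eq_bigr => j /negbTE jjc; rewrite mxE jjc.
Qed.

Section UnitColumns.

Variables (d n : nat) (A : 'M[nat]_(d, n)) (J : 'I_d -> 'I_n).
Hypothesis A_J : forall k r, A r (J k) = nat_of_bool (r == k).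

Definition unit_cols_comb (w : 'I_d -> nat) (j : 'I_n) : nat :=
  (\sum_(k < d) (j == J k) * w k)%N.

Lemma sum_unit_cols_comb (w : 'I_d -> nat) (r : 'I_d) :
  (\sum_(j < n) A r j * unit_cols_comb w j)%N = w r.
Proof.
have pick_col k : (\sum_(j < n) A r j * ((j == J k) * w k) = (r == k) * w k)%N.
  rewrite (bigD1 (J k)) //= eqxx mul1n A_J big1 ?addn0 // => j /negbTE ->.
  by rewrite mul0n muln0.
under eq_bigr => j _ do rewrite /unit_cols_comb big_distrr.
rewrite exchange_big; under eq_bigr => k _ do rewrite pick_col.
rewrite (bigD1 r) //= eqxx mul1n big1 ?addn0 // => k /negbTE.
by rewrite eq_sym => ->.
Qed.

Variables (jc : 'I_n) (i : 'I_d).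
Hypothesis A_i_jc_gt0 : (0 < A i jc)%N.

Let off_row_i (k : 'I_d) : nat := ((k != i) * A k jc)%N.

Lemma unit_cols_comb_off_row_i_jc : unit_cols_comb off_row_i jc = 0%N.
Proof.
rewrite /unit_cols_comb big1 // => k _; case: (eqVneq jc (J k)) => [jcJ|];
  last by rewrite mul0n.
suff -> : k = i by rewrite /off_row_i eqxx mul0n muln0.
by apply/eqP; move: A_i_jc_gt0; rewrite jcJ A_J eq_sym; case: eqP.
Qed.

Definition transfer (x : 'I_n -> nat) (j : 'I_n) : nat :=
  if j == jc then (A i jc * x jc)%N
  else (x j + x jc * unit_cols_comb off_row_i j)%N.

Lemma transfer_vpsol (b : 'I_d -> nat) (x : 'I_n -> nat) :
  vpsol A b x -> vpsol (replace_col A jc i) b (transfer x).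
Proof.
move=> Ax r; rewrite -Ax replace_col_row_sum [RHS](bigD1 jc) //= addnC.
rewrite /transfer eqxx.
under eq_bigr => j /negbTE jjc do rewrite jjc mulnDr mulnCA.
rewrite big_split -big_distrr /=.
have -> : (\sum_(j < n | j != jc) A r j * unit_cols_comb off_row_i j = off_row_i r)%N.
  rewrite -(sum_unit_cols_comb off_row_i r) [RHS](bigD1 jc) //=.
  by rewrite unit_cols_comb_off_row_i_jc muln0.
case: (eqVneq r i) => [->|ri]; rewrite /off_row_i ?eqxx ?ri /=.
  by rewrite mul1n mul0n muln0 addn0 addnC.
by rewrite mul0n add0n mul1n addnC mulnC.
Qed.

Lemma transfer_inj : injective transfer.
Proof.
move=> x y Exy.
have x_jc : x jc = y jc.
  apply/eqP; rewrite -(eqn_pmul2l A_i_jc_gt0).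
  by have := congr1 (fun z => z jc) Exy; rewrite /transfer eqxx => ->.
apply/funext => j; case: (eqVneq j jc) => [-> //|jjc].
by have := congr1 (fun z => z j) Exy; rewrite /transfer (negbTE jjc) x_jc => /addIn.
Qed.

End UnitColumns.

Theorem mainTheorem17 (d n : nat) (A : 'M[nat]_(d, n))
  (hE : forall k : 'I_d, exists j : 'I_n, forall r : 'I_d, A r j = nat_of_bool (r == k))
  (jc : 'I_n) (i : 'I_d) (hi : (0 < A i jc)%N) (b : 'I_d -> nat) :
  (vpsol A b #<= vpsol (replace_col A jc i) b)%card.
Proof.
have [J A_J] := choice hE.
apply/pcard_leP/injfunPex; exists (transfer A J jc i).
- by move=> x; apply: transfer_vpsol.
- by move=> x y _ _; apply: transfer_inj.
Qed.
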